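(* Let $n\ge 1$, let $\chi$ be an irreducible character of $S_n$, let $1\le k\le n$ and let $A,X^1,\ldots,X^k\in M_n(\mathbb{C})$. Then $$D^k d_{\chi}(A)(X^1,\ldots ,X^k)= \sum_{\sigma \in S_k} \sum_{\alpha \in Q_{k,n}}d_{\chi}\big(A(\alpha ;X^{\sigma(1)},\ldots ,X^{\sigma(k)})\big).$$ In particular, for every $X\in M_n(\mathbb{C})$, $$D^k d_{\chi}(A)(X,\ldots ,X)= k!\sum_{\alpha \in Q_{k,n}}d_{\chi}\big(A(\alpha ;X,\ldots ,X)\big).$$
   Context: For $A=(a_{ij})\in M_n(\mathbb{C})$, $d_\chi(A)=\sum_{\sigma\in S_n}\chi(\sigma)\prod_{i=1}^n a_{i\sigma(i)}$ (the immanant). The $k$-th derivative of $d_\chi$ at $A$ in direction $(X^1,\ldots,X^k)$ is $D^k d_\chi(A)(X^1,\ldots,X^k)=\frac{\partial^k}{\partial t_1\cdots\partial t_k}\big|_{t_1=\cdots=t_k=0} d_\chi(A+t_1X^1+\cdots+t_kX^k)$. $Q_{k,n}$ is the set of strictly increasing maps $\{1,\ldots,k\}\to\{1,\ldots,n\}$. For $\alpha\in Q_{k,n}$ and $Y^1,\ldots,Y^k\in M_n(\mathbb{C})$, $A(\alpha;Y^1,\ldots,Y^k)$ is the $n\times n$ matrix obtained from $A$ by replacing, for each $j=1,\ldots,k$, the $\alpha(j)$-th column of $A$ by the $\alpha(j)$-th column of $Y^j$, all other columns being those of $A$. *)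

From HB Require Import structures.
From mathcomp Require Import all_boot all_order all_algebra all_fingroup.
From mathcomp Require Import mxrepresentation.
From mathcomp Require Import complex.
From mathcomp Require Import all_classical all_reals all_analysis.

Set Implicit Arguments.
Unset Strict Implicit.
Unset Printing Implicit Defensive.

Import Order.TTheory GRing.Theory Num.Theory.
Import numFieldNormedType.Exports.
Local Open Scope ring_scope.

Definition immanant (K : comNzRingType) (n : nat) (chi : 'S_n -> K)
    (A : 'M[K]_n) : K :=
  \sum_(s : 'S_n) chi s * \prod_(i < n) A i (s i).

Definition repr_char (F : fieldType) (n d : nat)
    (rG : mx_representation F [set: 'S_n]%G d) : 'S_n -> F :=
  fun s => \tr (rG s).

Definition Qkn (k n : nat) : pred {ffun 'I_k -> 'I_n} :=
  [pred a : {ffun 'I_k -> 'I_n} |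
     [forall i : 'I_k, forall j : 'I_k, (i < j)%N ==> (a i < a j)%N]].

(** A(alpha; Y^1, ..., Y^k): column alpha(l) of A replaced by column alpha(l)
    of Y^l, other columns unchanged. *)
Definition repl_cols (K : Type) (k n : nat) (A : 'M[K]_n)
    (a : {ffun 'I_k -> 'I_n}) (Y : 'I_k -> 'M[K]_n) : 'M[K]_n :=
  \matrix_(i < n, j < n)
    match [pick l : 'I_k | a l == j] with
    | Some l => Y l i j
    | None => A i j
    end.

Definition upd (C : Type) (k : nat) (t : 'I_k -> C) (j : 'I_k) (s : C) :
    'I_k -> C := fun i => if i == j then s else t i.

Definition partial (C : numFieldType) (k : nat) (j : 'I_k)
    (g : ('I_k -> C) -> C) : ('I_k -> C) -> C :=
  fun t => derive1 (fun s : C => g (upd t j s)) (t j).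

Definition mixed_partial (C : numFieldType) (k : nat)
    (g : ('I_k -> C) -> C) : ('I_k -> C) -> C :=
  foldr (fun j h => partial j h) g (enum 'I_k).

Definition Dk (C : numFieldType) (n k : nat) (f : 'M[C]_n -> C)
    (A : 'M[C]_n) (X : 'I_k -> 'M[C]_n) : C :=
  mixed_partial (fun t : 'I_k -> C => f (A + \sum_(j < k) t j *: X j))
    (fun _ => 0).

From HB Require Import structures.
From mathcomp Require Import all_boot all_order all_algebra all_fingroup.
From mathcomp Require Import mxrepresentation.
From mathcomp Require Import complex.
From mathcomp Require Import all_classical all_reals all_analysis.

Set Implicit Arguments.
Unset Strict Implicit.
Unset Printing Implicit Defensive.

Import Order.TTheory GRing.Theory Num.Theory.
Import numFieldNormedType.Exports.
Local Open Scope ring_scope.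

(* Expanding each product along a permutation, d_chi(A + t_1 X^1 + ... + t_k X^k)
   is a polynomial in t whose terms are indexed by the assignments f of a source
   (A or one of the X^j) to every column; the term of f carries the monomial
   prod_j t_j^(number of columns taken from X^j).  The mixed derivative
   d^k/dt_1...dt_k at t = 0 kills every monomial except t_1 ... t_k, so only the
   assignments using each X^j in exactly one column survive.  Such an assignment
   is the same as its set of columns, i.e. some alpha in Q_{k,n}, together with
   sigma in S_k telling which X^j goes to the l-th of them, and the matrix it
   selects is A(alpha; X^sigma(1), ..., X^sigma(k)). *)

Section PolynomialFunctions.
Variables (C : numFieldType) (k : nat).

Definition monomial (m : 'I_k -> nat) (t : 'I_k -> C) : C :=
  \prod_(j < k) t j ^+ m j.

Definition polyfun (I : finType) (c : I -> C) (e : I -> 'I_k -> nat)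
    (t : 'I_k -> C) : C :=
  \sum_(i : I) c i * monomial (e i) t.

Lemma monomial_upd (m : 'I_k -> nat) t j s :
  monomial m (upd t j s) = s ^+ m j * \prod_(l < k | l != j) t l ^+ m l.
Proof.
rewrite /monomial (bigD1 j) //= /upd eqxx; congr (_ * _).
by apply: eq_bigr => l /negbTE ->.
Qed.

Lemma is_derive_sum_seq (I : Type) (r : seq I) (h : I -> C -> C)
    (dh : I -> C) (x v : C) :
  (forall i, is_derive x v (h i) (dh i)) ->
  is_derive x v (\sum_(i <- r) h i) (\sum_(i <- r) dh i).
Proof.
by move=> ?; elim/big_ind2: _ => // *; [exact: is_derive_cst|exact: is_deriveD].
Qed.

Lemma partial_polyfun (I : finType) (c : I -> C) e j :
  partial j (polyfun c e) =
  polyfun (fun i => c i * (e i j)%:R) (fun i => upd (e i) j (e i j).-1).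
Proof.
rewrite /partial; apply/funext => t.
pose b i := c i * \prod_(l < k | l != j) t l ^+ e i l.
have -> : (fun s => polyfun c e (upd t j s)) =
    \sum_(i <- index_enum I) b i \*: (@GRing.exp C ^~ (e i j)).
  rewrite fct_sumE; apply/funext => s; apply: eq_bigr => i _.
  by rewrite monomial_upd /= [s ^+ _ * _]mulrC mulrA.
have dmon i : is_derive (t j) 1 (b i \*: @GRing.exp C ^~ (e i j))
    (b i *: ((e i j)%:R *: t j ^+ (e i j).-1 *: 1)).
  by apply: is_deriveZ; apply: DeriveDef; [exact: exprn_derivable|exact: exp_derive].
rewrite derive1E (@derive_val _ _ _ _ _ _ _ (is_derive_sum_seq _ dmon)).
rewrite /polyfun; apply: eq_bigr => i _; rewrite /monomial (bigD1 j) //= /upd eqxx.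
rewrite (eq_bigr (fun l => t l ^+ e i l)) => [|l /negbTE -> //].
by rewrite /b /GRing.scale /= mulr1 -!mulrA; congr (_ * _); rewrite mulrC mulrA.
Qed.

End PolynomialFunctions.

Section MixedPartial.
Variables (C : numFieldType) (k : nat).

Lemma foldr_partial_polyfun (I : finType) (c : I -> C) (e : I -> 'I_k -> nat)
    (r : seq 'I_k) : uniq r ->
  foldr (fun j h => partial j h) (polyfun c e) r =
  polyfun (fun i => c i * \prod_(j <- r) (e i j)%:R)
          (fun i j => if j \in r then (e i j).-1 else e i j).
Proof.
elim: r => [_ /=|j r IHr /andP[jNr r_uniq] /=].
  by congr polyfun; apply/funext => i; rewrite big_nil mulr1.
rewrite IHr // partial_polyfun; congr polyfun; apply/funext => i.
  by rewrite (negbTE jNr) big_cons -mulrA; congr (_ * _); exact: mulrC.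
by apply/funext => l; rewrite /upd in_cons (negbTE jNr); case: eqP => [->|].
Qed.

Lemma mixed_coef_at0 (m : 'I_k -> nat) :
  \prod_(j < k) (m j)%:R * \prod_(j < k) (0 : C) ^+ (m j).-1 =
  [forall j, m j == 1%N]%:R.
Proof.
have [/forallP m1|/forallPn[j mj1]] := boolP [forall j, m j == 1%N].
  by rewrite !big1 ?mulr1 // => j _; rewrite (eqP (m1 j)).
case mj: (m j) mj1 => [|[|p]] // _.
  by rewrite (bigD1 j) //= mj mul0r mul0r.
by rewrite [X in _ * X](bigD1 j) //= mj expr0n mul0r mulr0.
Qed.

Lemma mixed_partial_polyfun_at0 (I : finType) (c : I -> C) (e : I -> 'I_k -> nat) :
  mixed_partial (polyfun c e) (fun _ => 0) =
  \sum_(i | [forall j, e i j == 1%N]) c i.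
Proof.
rewrite /mixed_partial foldr_partial_polyfun ?enum_uniq // /polyfun [RHS]big_mkcond.
apply: eq_bigr => i _; rewrite -mulrA big_enum /monomial /=.
rewrite [X in _ * (_ * X)](eq_bigr (fun j => 0 ^+ (e i j).-1)) => [|j _].
  by rewrite mixed_coef_at0; case: ifP; rewrite ?mulr1 ?mulr0.
by rewrite mem_enum.
Qed.

End MixedPartial.

Lemma sumr_option (V : nmodType) (T : finType) (F : option T -> V) :
  \sum_(o : option T) F o = F None + \sum_(j : T) F (Some j).
Proof.
rewrite (bigD1 None) //=; congr (_ + _).
rewrite (reindex_omap Some id) /=; last by case.
by apply: eq_bigl => j; rewrite eqxx.
Qed.

Section ColumnAssignments.
Variables (n k : nat).

Definition assign_count (f : {ffun 'I_n -> option 'I_k}) (j : 'I_k) : nat :=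
  #|[set c | f c == Some j]|.

Definition exact_assign (f : {ffun 'I_n -> option 'I_k}) : bool :=
  [forall j, assign_count f j == 1%N].

Variables (C : numFieldType) (A : 'M[C]_n) (X : 'I_k -> 'M[C]_n).

Definition assign_mx (f : {ffun 'I_n -> option 'I_k}) : 'M[C]_n :=
  \matrix_(i, c) if f c is Some j then X j i c else A i c.

Lemma prod_assign_weight (f : {ffun 'I_n -> option 'I_k}) (t : 'I_k -> C) :
  \prod_c (if f c is Some j then t j else 1) = monomial (assign_count f) t.
Proof.
transitivity (\prod_c \prod_j (if f c == Some j then t j else 1)).
  apply: eq_bigr => c _; case: (f c) => [j0|]; last by rewrite big1.
  rewrite (bigD1 j0) //= eqxx big1 ?mulr1 // => j j0Nj.
  by case: eqP => // -[j0j]; rewrite j0j eqxx in j0Nj.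
rewrite exchange_big /monomial; apply: eq_bigr => j _.
rewrite /assign_count -prodr_const [RHS]big_mkcond.
by apply: eq_bigr => c _; rewrite inE.
Qed.

Lemma prod_perm_entries_expand (s : 'S_n) (t : 'I_k -> C) :
  \prod_i (A + \sum_j t j *: X j) i (s i) =
  \sum_(f : {ffun 'I_n -> option 'I_k})
     (\prod_i assign_mx f i (s i)) * monomial (assign_count f) t.
Proof.
have by_column (G : 'I_n -> 'I_n -> C) :
    \prod_i G i (s i) = \prod_c G ((s^-1)%g c) c.
  rewrite [RHS](reindex_inj (@perm_inj _ s)).
  by apply: eq_bigr => i _; rewrite permK.
pose entry (r c : 'I_n) (o : option 'I_k) :=
  if o is Some j then X j r c else A r c.
have expand_entry c : (A + \sum_j t j *: X j) ((s^-1)%g c) c =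
    \sum_(o : option 'I_k) (if o is Some j then t j else 1) * entry ((s^-1)%g c) c o.
  rewrite sumr_option /= mul1r !mxE summxE; congr (_ + _).
  by apply: eq_bigr => j _; rewrite mxE.
rewrite by_column (eq_bigr _ (fun c _ => expand_entry c)) bigA_distr_bigA /=.
apply: eq_bigr => f _; rewrite big_split /= prod_assign_weight mulrC by_column.
by congr (_ * _); apply: eq_bigr => c _; rewrite mxE.
Qed.

Lemma immanant_shift_polyfun (chi : 'S_n -> C) (t : 'I_k -> C) :
  immanant chi (A + \sum_j t j *: X j) =
  polyfun (fun p : 'S_n * {ffun 'I_n -> option 'I_k} =>
             chi p.1 * \prod_i assign_mx p.2 i (p.1 i))
          (fun p => assign_count p.2) t.
Proof.
rewrite /immanant /polyfun -(pair_bigA _ (fun s f =>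
  chi s * \prod_i assign_mx f i (s i) * monomial (assign_count f) t)) /=.
apply: eq_bigr => s _.
rewrite prod_perm_entries_expand mulr_sumr.
by apply: eq_bigr => f _; rewrite mulrA.
Qed.

Lemma Dk_immanant_exact_assign (chi : 'S_n -> C) :
  Dk (immanant chi) A X = \sum_(f | exact_assign f) immanant chi (assign_mx f).
Proof.
rewrite /Dk (funext (immanant_shift_polyfun chi)) mixed_partial_polyfun_at0.
by rewrite /immanant exchange_big pair_big_dep.
Qed.

End ColumnAssignments.

Lemma sorted_enum_ord (m : nat) : sorted (relpre val ltn) (enum 'I_m).
Proof. by rewrite -sorted_map val_enum_ord iota_ltn_sorted. Qed.

Section IncreasingMaps.
Variables (k n : nat).
Implicit Types (a : {ffun 'I_k -> 'I_n}).

Lemma Qkn_inj a : Qkn a -> injective a.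
Proof.
move=> /forallP a_incr i j aij; case: (ltngtP i j) => [ij|ji|/val_inj //].
  by have := implyP (forallP (a_incr i) j) ij; rewrite aij ltnn.
by have := implyP (forallP (a_incr j) i) ji; rewrite aij ltnn.
Qed.

Lemma Qkn_sorted a : Qkn a -> sorted ltn (map val (codom a)).
Proof.
move=> /forallP a_incr; rewrite codomE -map_comp sorted_map.
apply: (sub_sorted _ (sorted_enum_ord k)) => i j /= ij.
exact: (implyP (forallP (a_incr i) j)).
Qed.

Lemma Qkn_eq a a' : Qkn a -> Qkn a' -> codom a =i codom a' -> a = a'.
Proof.
move=> Qa Qa' same_img.
have /(inj_map val_inj) : map val (codom a) = map val (codom a').
  apply: (irr_sorted_eq ltn_trans ltnn); [exact: Qkn_sorted|exact: Qkn_sorted|].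
  by move=> x; apply/mapP/mapP => -[c c_img ->]; exists c; rewrite ?same_img // -same_img.
by rewrite !codom_ffun => /val_inj /(can_inj fgraphK).
Qed.

End IncreasingMaps.

Section AssignmentOfPermutation.
Variables (n k : nat).
Implicit Types (s : 'S_k) (a : {ffun 'I_k -> 'I_n}).

Definition assign_of s a : {ffun 'I_n -> option 'I_k} :=
  [ffun c => omap s [pick l | a l == c]].

Lemma assign_of_some s a c : (assign_of s a c != None) = (c \in codom a).
Proof.
rewrite ffunE; case: pickP => [l /eqP <-|a'c] /=; first by rewrite codom_f.
by apply/esym/codomP => -[l cal]; have := a'c l; rewrite cal eqxx.
Qed.

Lemma assign_of_val s a l : injective a -> assign_of s a (a l) = Some (s l).
Proof.
move=> a_inj; rewrite ffunE; case: pickP => [l' /eqP/a_inj -> //|/(_ l)].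
by rewrite eqxx.
Qed.

Lemma assign_of_inj s a s' a' : Qkn a -> Qkn a' ->
  assign_of s a = assign_of s' a' -> s = s' /\ a = a'.
Proof.
move=> Qa Qa' eq_assign.
have eq_a : a = a'.
  by apply: Qkn_eq => // c; rewrite -(assign_of_some s) -(assign_of_some s') eq_assign.
split=> //; subst a'; apply/permP => l.
have := congr1 (fun f : {ffun 'I_n -> option 'I_k} => f (a l)) eq_assign.
by rewrite /= !(assign_of_val _ _ (Qkn_inj Qa)) => -[].
Qed.

Lemma exact_assign_of s a : Qkn a -> exact_assign (assign_of s a).
Proof.
move=> /Qkn_inj a_inj; apply/forallP => j; apply/cards1P.
exists (a ((s^-1)%g j)); apply/setP => c; rewrite !inE.
have [/codomP[l ->]|c_img] := boolP (c \in codom a).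
  by rewrite assign_of_val // (inj_eq a_inj) -(inj_eq (@perm_inj _ s)) permKV.
move: (c_img); rewrite -(assign_of_some s) negbK => /eqP ->.
by apply/esym/eqP => c_val; rewrite c_val codom_f in c_img.
Qed.

End AssignmentOfPermutation.

Section ExactAssignSurj.
Variables (n k : nat) (f : {ffun 'I_n -> option 'I_k}).
Hypothesis f_exact : exact_assign f.

Lemma exact_assign_unique j c c' : f c = Some j -> f c' = Some j -> c = c'.
Proof.
have /cards1P[c0 f_j] := forallP f_exact j.
have in_f_j c1 : f c1 = Some j -> c1 = c0.
  by move=> fc1; apply/set1P; rewrite -f_j inE fc1.
by move=> /in_f_j -> /in_f_j ->.
Qed.

Let preimage j : exists c, f c == Some j.
Proof.
have /cards1P[c f_j] := forallP f_exact j.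
by exists c; have := set11 c; rewrite -f_j inE.
Qed.

Let beta j := xchoose (preimage j).

Let f_beta j : f (beta j) = Some j.
Proof. exact/eqP/(xchooseP (preimage j)). Qed.

Let supp := [seq c <- enum 'I_n | f c != None].

Let size_supp : size supp = k.
Proof.
have beta_inj : injective beta by move=> j j' /(congr1 f); rewrite !f_beta => -[].
have supp_uniq : uniq supp by apply/filter_uniq/enum_uniq.
rewrite -(card_uniqP supp_uniq) -[RHS]card_ord -(card_codom beta_inj).
apply: eq_card => c; rewrite mem_filter mem_enum andbT.
apply/idP/codomP => [|[j ->]]; last by rewrite f_beta.
by case fc: (f c) => [j|] // _; exists j; apply: exact_assign_unique fc (f_beta j).
Qed.

Lemma exact_assign_surj : exists s a, Qkn a /\ assign_of s a = f.
Proof.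
have supp_k : size supp == k by rewrite size_supp.
pose a := [ffun l => tnth (Tuple supp_k) l].
have val_lt_trans : transitive (relpre (@nat_of_ord n) ltn).
  by move=> ? ? ?; exact: ltn_trans.
have Qa : Qkn a.
  apply/forallP=> i; apply/forallP=> j; apply/implyP=> ij.
  rewrite !ffunE !(tnth_nth (a i)) /=.
  apply: (sorted_ltn_nth val_lt_trans); rewrite ?inE ?size_supp //.
  by apply: sorted_filter; [exact: val_lt_trans|exact: sorted_enum_ord].
have f_a l : f (a l) = Some (odflt l (f (a l))).
  have : a l \in supp by rewrite ffunE mem_tnth.
  by rewrite mem_filter; case: (f (a l)).
have s_inj : injective (fun l => odflt l (f (a l))).
  move=> l l' eq_s; apply: (Qkn_inj Qa).
  by apply: exact_assign_unique (f_a l) _; rewrite f_a eq_s.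
exists (perm s_inj), a; split=> //; apply/ffunP => c; rewrite ffunE.
case: pickP => [l /eqP <-|a'c] /=; first by rewrite permE -f_a.
case fc: (f c) => [j|] //.
have c_supp : c \in supp by rewrite mem_filter fc mem_enum.
have c_idx : (index c supp < k)%N by rewrite -size_supp index_mem.
have := a'c (Ordinal c_idx); rewrite ffunE (tnth_nth c) /= nth_index //.
by rewrite eqxx.
Qed.

End ExactAssignSurj.

Lemma sum_assign_of (n k : nat) (V : nmodType)
    (G : {ffun 'I_n -> option 'I_k} -> V) :
  \sum_(s : 'S_k) \sum_(a | Qkn a) G (assign_of s a) =
  \sum_(f | exact_assign f) G f.
Proof.
rewrite pair_big_dep /= (partition_big (fun p => assign_of p.1 p.2) (@exact_assign n k));
  last by move=> [s a] /= Qa; exact: exact_assign_of.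
apply: eq_bigr => f f_exact; have [s0 [a0 [Qa0 <-]]] := exact_assign_surj f_exact.
rewrite (big_pred1 (s0, a0)) // => -[s a] /=.
by apply/andP/eqP => [[Qa /eqP /assign_of_inj[]// -> ->]|[-> ->]].
Qed.

Lemma repl_cols_assign_of (C : numFieldType) (n k : nat) (A : 'M[C]_n)
    (X : 'I_k -> 'M[C]_n) (s : 'S_k) (a : {ffun 'I_k -> 'I_n}) :
  repl_cols A a (fun l => X (s l)) = assign_mx A X (assign_of s a).
Proof. by apply/matrixP => i c; rewrite !mxE ffunE; case: pickP. Qed.

Lemma Dk_immanant (C : numFieldType) (n k : nat) (chi : 'S_n -> C)
    (A : 'M[C]_n) (X : 'I_k -> 'M[C]_n) :
  Dk (immanant chi) A X =
    \sum_(s : 'S_k) \sum_(a : {ffun 'I_k -> 'I_n} | Qkn a)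
       immanant chi (repl_cols A a (fun l => X (s l))).
Proof.
rewrite Dk_immanant_exact_assign -sum_assign_of.
by apply: eq_bigr => s _; apply: eq_bigr => a _; rewrite repl_cols_assign_of.
Qed.

Theorem mainTheorem2 (R : realType) (n k d : nat)
  (rG : mx_representation R[i] [set: 'S_n]%G d)
  (A : 'M[R[i]]_n) (X : 'I_k -> 'M[R[i]]_n) :
  (1 <= n)%N -> mx_irreducible rG -> (1 <= k)%N -> (k <= n)%N ->
  Dk (immanant (repr_char rG)) A X =
    \sum_(s : 'S_k) \sum_(a : {ffun 'I_k -> 'I_n} | Qkn a)
       immanant (repr_char rG) (repl_cols A a (fun l => X (s l)))
  /\ (forall Y : 'M[R[i]]_n,
       Dk (immanant (repr_char rG)) A (fun _ : 'I_k => Y) =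
         k`!%:R * \sum_(a : {ffun 'I_k -> 'I_n} | Qkn a)
            immanant (repr_char rG) (repl_cols A a (fun _ => Y))).
Proof.
(* The identity holds for every function chi on S_n and all n and k. *)
move=> _ _ _ _; split=> [|Y]; first exact: Dk_immanant.
by rewrite Dk_immanant sumr_const card_Sn mulr_natl.
Qed.
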